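(* For every positive integer $N$ and all real $x,\delta\ge0$, \[ |\varrho_N(x)|\le\exp\!\left(-\frac{\pi^2\delta^2}{2}\cdot\#\mathcal{S}_1(N,\delta,x)\right). \]
   Context: For a positive integer $N$ and real $x$, $\varrho_N(x):=\prod_{n=1}^N\cos(\pi x/n)$. For $y\in\mathbb{R}$, $\|y\|$ denotes the distance from $y$ to the nearest integer. For positive integers $k,N$ and real $\delta,x\ge0$, $\mathcal{S}_k(N,\delta,x):=\{n\in\{1,\dots,N\} : \|x/n^k\|\ge\delta\}$. *)

From Stdlib Require Import Reals Lra Lia List.
Open Scope R_scope.

Fixpoint rho (N : nat) (x : R) : R :=
  match N with
  | O => 1
  | S m => rho m x * cos (PI * x / INR (S m))
  end.

Definition dist_int (y : R) : R :=
  Rmin (y - IZR (Int_part y)) (IZR (Int_part y) + 1 - y).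

Definition S_set (k N : nat) (delta x : R) : list nat :=
  filter (fun n => if Rle_dec delta (dist_int (x / (INR n ^ k))) then true else false)
         (seq 1 N).

(** Each factor obeys |cos (π y)| = cos (π ||y||) <= exp (-π² ||y||² / 2), and
    for n ∈ S_1(N, δ, x) this is at most exp (-π² δ² / 2); the remaining factors
    are bounded by 1. The scalar inequality cos t <= exp (-t²/2) on [0, π/2]
    compares the Taylor bound cos t <= 1 - t²/2 + t⁴/24 with
    exp (-u) = exp (-u/3)³ >= (1 - u/3)³ for u = t²/2. *)

From Stdlib Require Import Reals List Lra Lia.
Open Scope R_scope.

Lemma cos_le_exp_neg_sqr_half (t : R) :
  0 <= t -> t <= PI / 2 -> cos t <= exp (- (t ^ 2 / 2)).
Proof.
  intros Ht0 HtPI.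
  assert (HPI4 : PI <= 4) by (pose proof PI_4; lra).
  destruct (cos_bound t 0) as [_ Hcos]; try lra.
  assert (Htaylor : cos_approx t (2 * (0 + 1)) = 1 - t ^ 2 / 2 + t ^ 4 / 24)
    by (unfold cos_approx, cos_term; simpl; field).
  rewrite Htaylor in Hcos.
  set (u := t ^ 2 / 2).
  assert (Hu0 : 0 <= u) by (unfold u; nra).
  assert (Hu2 : u <= 2) by (unfold u; nra).
  assert (Ht4 : t ^ 4 = 4 * u ^ 2) by (unfold u; field).
  assert (Hcube : exp (- u) = exp (- u / 3) ^ 3).
  { simpl. rewrite Rmult_1_r, <- !exp_plus. f_equal. field. }
  assert (Hexp : (1 - u / 3) ^ 3 <= exp (- u / 3) ^ 3).
  { apply pow_incr. pose proof (exp_ineq1_le (- u / 3)). lra. }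
  assert (Hpoly : 1 - u + u ^ 2 / 6 <= (1 - u / 3) ^ 3).
  { assert (0 <= u ^ 2 * (1 / 6 - u / 27)) by (apply Rmult_le_pos; nra). nra. }
  rewrite Hcube. nra.
Qed.

Lemma Rabs_cos_add_INR_PI (t : R) (n : nat) :
  Rabs (cos (t + INR n * PI)) = Rabs (cos t).
Proof.
  induction n as [|n IHn].
  - simpl. rewrite Rmult_0_l, Rplus_0_r. reflexivity.
  - rewrite S_INR.
    replace (t + (INR n + 1) * PI) with (t + INR n * PI + PI) by ring.
    rewrite neg_cos, Rabs_Ropp. exact IHn.
Qed.

Lemma Rabs_cos_add_IZR_PI (t : R) (k : Z) :
  Rabs (cos (t + IZR k * PI)) = Rabs (cos t).
Proof.
  destruct (Z.le_ge_cases 0 k) as [Hk | Hk].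
  - replace k with (Z.of_nat (Z.to_nat k)) by lia.
    rewrite <- INR_IZR_INZ. apply Rabs_cos_add_INR_PI.
  - replace k with (- Z.of_nat (Z.to_nat (- k)))%Z by lia.
    rewrite opp_IZR, <- INR_IZR_INZ.
    rewrite <- (Rabs_cos_add_INR_PI (t + - INR (Z.to_nat (- k)) * PI) (Z.to_nat (- k))).
    f_equal. f_equal. ring.
Qed.

Lemma Rabs_cos_PI_mul_sub_IZR (y : R) (k : Z) :
  Rabs (cos (PI * (y - IZR k))) = Rabs (cos (PI * y)).
Proof.
  rewrite <- (Rabs_cos_add_IZR_PI (PI * (y - IZR k)) k).
  f_equal. f_equal. ring.
Qed.

Lemma dist_int_bounds (y : R) : 0 <= dist_int y <= 1 / 2.
Proof.
  unfold dist_int. pose proof (base_Int_part y).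
  unfold Rmin; destruct Rle_dec; lra.
Qed.

Lemma Rabs_cos_PI_mul (y : R) : Rabs (cos (PI * y)) = cos (PI * dist_int y).
Proof.
  pose proof PI_RGT_0. pose proof (base_Int_part y).
  unfold dist_int, Rmin. destruct Rle_dec.
  - rewrite <- (Rabs_cos_PI_mul_sub_IZR y (Int_part y)).
    apply Rabs_right, Rle_ge, cos_ge_0; nra.
  - rewrite <- (Rabs_cos_PI_mul_sub_IZR y (Int_part y + 1)), plus_IZR.
    replace (PI * (y - (IZR (Int_part y) + 1)))
      with (- (PI * (IZR (Int_part y) + 1 - y))) by ring.
    rewrite cos_neg. apply Rabs_right, Rle_ge, cos_ge_0; nra.
Qed.

Lemma Rabs_cos_PI_mul_le_exp (y : R) :
  Rabs (cos (PI * y)) <= exp (- (PI ^ 2 * dist_int y ^ 2 / 2)).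
Proof.
  pose proof (dist_int_bounds y). pose proof PI_RGT_0.
  rewrite Rabs_cos_PI_mul.
  replace (PI ^ 2 * dist_int y ^ 2 / 2) with ((PI * dist_int y) ^ 2 / 2) by field.
  apply cos_le_exp_neg_sqr_half; nra.
Qed.

Lemma Rabs_cos_PI_mul_le_exp_of_le_dist_int (delta y : R) :
  0 <= delta -> delta <= dist_int y ->
  Rabs (cos (PI * y)) <= exp (- (PI ^ 2 * delta ^ 2 / 2)).
Proof.
  intros Hdelta Hdist.
  apply (Rle_trans _ _ _ (Rabs_cos_PI_mul_le_exp y)).
  pose proof PI_RGT_0.
  assert (delta ^ 2 <= dist_int y ^ 2) by (apply pow_incr; lra).
  assert (Hexponent : - (PI ^ 2 * dist_int y ^ 2 / 2) <= - (PI ^ 2 * delta ^ 2 / 2))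
    by nra.
  destruct (Rle_lt_or_eq_dec _ _ Hexponent) as [Hlt | ->].
  - left. now apply exp_increasing.
  - right. reflexivity.
Qed.

Lemma length_S_set_succ (k N : nat) (delta x : R) :
  length (S_set k (S N) delta x) =
  (length (S_set k N delta x) +
   if Rle_dec delta (dist_int (x / INR (S N) ^ k)) then 1 else 0)%nat.
Proof.
  unfold S_set. rewrite seq_S, filter_app, length_app. simpl.
  destruct Rle_dec; reflexivity.
Qed.

Lemma Rabs_rho_le (N : nat) (x delta : R) : 0 <= delta ->
  Rabs (rho N x) <=
  exp (- (PI ^ 2 * delta ^ 2 / 2) * INR (length (S_set 1 N delta x))).
Proof.
  intro Hdelta.
  induction N as [|N IHN].
  - simpl. rewrite Rmult_0_r, exp_0, Rabs_R1. lra.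
  - rewrite length_S_set_succ, plus_INR, Rmult_plus_distr_l, exp_plus.
    cbn [rho]. rewrite Rabs_mult.
    apply Rmult_le_compat; try apply Rabs_pos; try exact IHN.
    replace (PI * x / INR (S N)) with (PI * (x / INR (S N) ^ 1))
      by (rewrite pow_1; unfold Rdiv; ring).
    destruct Rle_dec as [Hdist | _]; simpl INR.
    + rewrite Rmult_1_r. now apply Rabs_cos_PI_mul_le_exp_of_le_dist_int.
    + rewrite Rmult_0_r, exp_0. apply Rabs_le, COS_bound.
Qed.

Theorem lemma3p1 (N : nat) (x delta : R) :
  (1 <= N)%nat -> 0 <= x -> 0 <= delta ->
  Rabs (rho N x) <=
  exp (- (PI ^ 2 * delta ^ 2 / 2) * INR (length (S_set 1 N delta x))).
Proof.
  intros _ _ Hdelta. exact (Rabs_rho_le N x delta Hdelta).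
Qed.
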